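(* For every $d\ge 5$, $\mu(Q_d)\le 2^{d-1}$.
   Context: $Q_d$ is the hypercube with vertex set $\{0,1\}^d$, two vertices adjacent iff their strings differ in exactly one bit. For a connected graph $G$ and $X\subseteq V(G)$, two vertices $x,y$ are $X$-visible if some shortest $x,y$-path has no internal vertex in $X$. $X$ is a mutual-visibility set if every two vertices of $X$ are $X$-visible; $\mu(G)$ is the maximum cardinality of a mutual-visibility set of $G$. *)

From mathcomp Require Import all_boot.
From Stdlib Require Import ClassicalEpsilon.
Set Implicit Arguments. Unset Strict Implicit. Unset Printing Implicit Defensive.

Definition pbool (P : Prop) : bool :=
  if excluded_middle_informative P then true else false.

Section Graph.
Variables (T : finType) (e : rel T).

(* [p] is the list of vertices after [x] of a walk from [x] to [y];
   its length (number of edges) is [size p]. *)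
Definition walk (x y : T) (p : seq T) : bool := path e x p && (last x p == y).

Definition shortest_path (x y : T) (p : seq T) : Prop :=
  walk x y p /\ forall q, walk x y q -> size p <= size q.

(* internal vertices of the walk x :: p (ending at last x p):
   all vertices except the first (x) and the last one *)
Definition internal (x : T) (p : seq T) : seq T := behead (belast x p).

Definition X_visible (X : {set T}) (x y : T) : Prop :=
  exists p, shortest_path x y p /\ all (fun v => v \notin X) (internal x p).

Definition mutual_visibility_set (X : {set T}) : Prop :=
  forall x y, x \in X -> y \in X -> X_visible X x y.

Definition mu : nat :=
  \max_(X : {set T} | pbool (mutual_visibility_set X)) #|X|.
End Graph.

Definition hamming d (u v : d.-tuple bool) : nat :=
  count (fun i : 'I_d => tnth u i != tnth v i) (enum 'I_d).
Definition Q_adj d : rel (d.-tuple bool) := fun u v => hamming u v == 1.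

From mathcomp Require Import all_boot zify.
From Stdlib Require Import ClassicalEpsilon.
Set Implicit Arguments. Unset Strict Implicit. Unset Printing Implicit Defensive.

(* A vertex on a geodesic between x and y agrees with x and y wherever they agree, so the
   restriction of a mutual-visibility set of Q_(d+1) to either facet {v_1 = b} is a
   mutual-visibility set of Q_d, and mu(Q_(d+1)) <= 2 mu(Q_d).  It remains to see
   mu(Q_5) <= 16, which is checked by computation: exhaustive search shows that the
   mutual-visibility sets of Q_4 have at most 9 vertices and lists those with 8 or 9, and
   no two of them placed in the two facets of Q_5 with 17 or more vertices in total form
   a mutual-visibility set. *)

Section Cube.
Variable n : nat.
Local Notation V := (n.-tuple bool).

Definition diff_set (u v : V) : {set 'I_n} := [set i | tnth u i != tnth v i].

Lemma hamming_diff_set (u v : V) : hamming u v = #|diff_set u v|.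
Proof.
rewrite /hamming cardE /enum_mem size_filter count_filter; apply: eq_count => i.
by rewrite !inE andbT.
Qed.

Lemma diff_set_subU (u v w : V) : diff_set u w \subset diff_set u v :|: diff_set v w.
Proof.
apply/subsetP => i; rewrite !inE.
by case: (tnth u i); case: (tnth v i); case: (tnth w i).
Qed.

Lemma hamming_triangle (u v w : V) : hamming u w <= hamming u v + hamming v w.
Proof.
rewrite !hamming_diff_set.
exact: leq_trans (subset_leq_card (diff_set_subU u v w)) (leq_card_setU _ _).
Qed.

Lemma hamming_eq0 (u v : V) : (hamming u v == 0) = (u == v).
Proof.
rewrite hamming_diff_set cards_eq0; apply/eqP/eqP => [Duv|->].
  apply: eq_from_tnth => i; apply/eqP/negPn/negP => Hi.
  by move/setP: Duv => /(_ i); rewrite !inE Hi.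
by apply/setP => i; rewrite !inE eqxx.
Qed.

Lemma hamming_le_dim (u v : V) : hamming u v <= n.
Proof. by rewrite hamming_diff_set; apply: leq_trans (max_card _) _; rewrite card_ord. Qed.

Lemma hamming_between_tnth (x v y : V) c :
  hamming x v + hamming v y = hamming x y -> tnth x c = tnth y c -> tnth v c = tnth x c.
Proof.
move=> Hxvy Hc; apply/eqP; apply: contraT => Hvc.
have Hcc : c \in diff_set x v :&: diff_set v y by rewrite !inE eq_sym Hvc -Hc.
have Hpos : 0 < #|diff_set x v :&: diff_set v y| by apply/card_gt0P; exists c.
have := cardsUI (diff_set x v) (diff_set v y).
have := subset_leq_card (diff_set_subU x v y).
rewrite -!hamming_diff_set Hxvy; lia.
Qed.

Lemma hamming_le_walk (x y : V) p : walk (@Q_adj n) x y p -> hamming x y <= size p.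
Proof.
elim: p x => [|z p IHp] x; rewrite /walk /=.
  by move=> /eqP ->; rewrite leqn0 hamming_eq0.
case/andP=> /andP [/eqP Hxz Hp] Hlast.
apply: leq_trans (hamming_triangle x z y) _.
by rewrite Hxz add1n ltnS IHp // /walk Hp.
Qed.

Definition geodesic (x y : V) (p : seq V) : bool :=
  walk (@Q_adj n) x y p && (size p == hamming x y).

Lemma exists_geodesic (x y : V) : exists p, geodesic x y p.
Proof.
move Hk: (hamming x y) => k; elim: k x Hk => [|k IHk] x Hk.
  by exists [::]; rewrite /geodesic /walk /= -hamming_eq0 Hk.
have /card_gt0P [i Hi] : 0 < #|diff_set x y| by rewrite -hamming_diff_set Hk.
pose z : V := [tuple (if j == i then tnth y j else tnth x j) | j < n].
have Dxz : diff_set x z = [set i].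
  apply/setP => j; rewrite !inE tnth_mktuple.
  by case: (j =P i) => [->|_]; [move: Hi; rewrite inE | rewrite eqxx].
have Dzy : diff_set z y = diff_set x y :\ i.
  by apply/setP => j; rewrite !inE tnth_mktuple; case: (j =P i) => [->|_]; rewrite ?eqxx.
have Hzy : hamming z y = k.
  rewrite hamming_diff_set Dzy.
  by move: (cardsD1 i (diff_set x y)); rewrite Hi -hamming_diff_set Hk add1n => -[].
have [p /andP [Hp /eqP Hsize]] := IHk z Hzy.
exists (z :: p); move: Hp; rewrite /geodesic /walk /= => /andP [-> ->].
by rewrite /Q_adj hamming_diff_set Dxz cards1 Hsize Hzy Hk !eqxx.
Qed.

Lemma shortest_path_geodesic (x y : V) p :
  shortest_path (@Q_adj n) x y p -> geodesic x y p.
Proof.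
case=> Hp Hmin; rewrite /geodesic Hp eqn_leq hamming_le_walk // andbT.
by have [q /andP [Hq /eqP <-]] := exists_geodesic x y; apply: Hmin.
Qed.

Lemma geodesic_cons (x y z : V) q :
  geodesic x y (z :: q) -> hamming x z = 1 /\ geodesic z y q.
Proof.
rewrite /geodesic /walk /= => /andP [/andP [/andP [/eqP Hxz Hq] Hlast] /eqP Hsize].
split=> //; rewrite Hq Hlast eqn_leq hamming_le_walk /walk ?Hq ?Hlast //.
by have := hamming_triangle x z y; rewrite Hxz -Hsize add1n ltnS => ->.
Qed.

Lemma geodesic_between (x y v : V) p :
  geodesic x y p -> v \in p -> hamming x v + hamming v y = hamming x y.
Proof.
move=> Hgeo Hv; case/path.splitP: Hv Hgeo => p1 p2 /andP [Hp /eqP Hsize].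
move: Hp; rewrite /walk cat_path last_cat rcons_path last_rcons.
case/andP=> /andP [/andP [Hp1 Hv] Hp2] Hlast.
have Hxv : hamming x v <= size (rcons p1 v).
  by apply: hamming_le_walk; rewrite /walk rcons_path Hp1 Hv last_rcons /=.
have Hvy : hamming v y <= size p2 by apply: hamming_le_walk; rewrite /walk Hp2.
apply/eqP; rewrite eqn_leq hamming_triangle andbT -Hsize size_cat.
exact: leq_add.
Qed.

Lemma geodesic_tnth (x y : V) p c :
  geodesic x y p -> tnth x c = tnth y c -> {in p, forall v, tnth v c = tnth x c}.
Proof. by move=> Hp Hc v Hv; apply: hamming_between_tnth (geodesic_between Hp Hv) Hc. Qed.

Definition visible (X : {set V}) (x y : V) : Prop :=
  exists2 p, geodesic x y p & all (fun v => v \notin X) (internal x p).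

Definition mutually_visible (X : {set V}) : Prop := {in X &, forall x y, visible X x y}.

Lemma mutual_visibility_set_visible (X : {set V}) :
  mutual_visibility_set (@Q_adj n) X -> mutually_visible X.
Proof.
by move=> HX x y Hx Hy; case: (HX x y Hx Hy) => p [/shortest_path_geodesic Hp Hin]; exists p.
Qed.

End Cube.

Section Facets.
Variable k : nat.
Local Notation V := (k.-tuple bool).
Local Notation W := (k.+1.-tuple bool).

Definition cons_vertex (b : bool) (t : V) : W := [tuple of b :: t].

Definition facet (X : {set W}) (b : bool) : {set V} := [set t | cons_vertex b t \in X].

Lemma cons_vertex_inj b : injective (cons_vertex b).
Proof. by move=> u v /(congr1 (fun w : W => behead w)) /val_inj. Qed.

Lemma hamming_cons b (u v : V) : hamming (cons_vertex b u) (cons_vertex b v) = hamming u v.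
Proof.
rewrite /hamming enum_ordSl /= tnth0 eqxx /= count_map.
by apply: eq_count => i /=; rewrite !tnthS.
Qed.

Lemma facet_visible (X : {set W}) b : mutually_visible X -> mutually_visible (facet X b).
Proof.
move=> HX t t'; rewrite !inE => Ht Ht'.
have [p Hp Hin] := HX _ _ Ht Ht'.
have Hhead v : v \in p -> v = cons_vertex b (behead_tuple v).
  move=> Hv; rewrite [LHS]tuple_eta; congr [tuple of _ :: _].
  by rewrite /thead (geodesic_tnth Hp) ?tnth0.
pose q := [seq behead_tuple (v : W) : V | v <- p].
have Epq : p = map (cons_vertex b) q.
  by rewrite /q -map_comp -[LHS]map_id; apply/eq_in_map => v /Hhead.
have Eadj : relpre (cons_vertex b) (@Q_adj k.+1) =2 @Q_adj k.
  by move=> u v; rewrite /= /Q_adj hamming_cons.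
exists q.
  move: Hp; rewrite /geodesic /walk Epq path_map last_map size_map hamming_cons.
  by rewrite (eq_path Eadj) (inj_eq (@cons_vertex_inj b)).
by move: Hin; rewrite Epq /internal belast_map behead_map all_map; apply: sub_all => v; rewrite /= inE.
Qed.

Lemma card_facets (X : {set W}) : #|X| = #|facet X false| + #|facet X true|.
Proof.
have Ecard b : #|facet X b| = #|[set v in X | thead v == b]|.
  rewrite -(card_imset _ (@cons_vertex_inj b)); apply: eq_card => v; rewrite !inE.
  apply/imsetP/andP => [[t]|[Hv /eqP Hb]].
    by rewrite inE => Ht ->; rewrite Ht /thead tnth0.
  by exists (behead_tuple v); rewrite ?inE /cons_vertex -Hb -tuple_eta.
rewrite !Ecard -(cardsID [set v : W | thead v] X) addnC; congr (_ + _); apply: eq_card => v;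
  by rewrite !inE; case: (thead v); rewrite ?andbT ?andbF.
Qed.

End Facets.

Fixpoint words (m : nat) : seq (seq bool) :=
  if m is m'.+1 then map (cons false) (words m') ++ map (cons true) (words m')
  else [:: [::]].

Lemma size_mem_words m s : s \in words m -> size s = m.
Proof.
elim: m s => [|m IHm] s /=; first by rewrite inE => /eqP ->.
by rewrite mem_cat => /orP [] /mapP [t /IHm Ht ->]; rewrite /= Ht.
Qed.

Lemma size_words m : size (words m) = 2 ^ m.
Proof. by elim: m => //= m IHm; rewrite size_cat !size_map IHm expnS mul2n addnn. Qed.

Lemma mem_words s : s \in words (size s).
Proof.
elim: s => [|b s IHs] //=; rewrite mem_cat.
by case: b; apply/orP; [right | left]; apply: map_f.
Qed.

Lemma uniq_words m : uniq (words m).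
Proof.
elim: m => [|m IHm] //=; rewrite cat_uniq !map_inj_uniq ?IHm ?andbT; try by move=> ? ? [].
by apply/hasPn => s /mapP [t _ ->]; apply/mapP => -[u _ []].
Qed.

Definition hamming_seq (u v : seq bool) : nat := count (fun p => p.1 != p.2) (zip u v).

Lemma hamming_seqE n (u v : n.-tuple bool) : hamming u v = hamming_seq u v.
Proof.
rewrite /hamming_seq -[in zip u v](map_tnth_enum u) -[in zip _ v](map_tnth_enum v).
by rewrite zip_map count_map.
Qed.

(* [vm_compute] evaluates both arguments of [&&] and [||]; these variants stop at the first
   decisive item. *)
Fixpoint all_lazy T (p : pred T) (s : seq T) : bool :=
  if s is x :: s' then (if p x then all_lazy p s' else false) else true.

Fixpoint has_lazy T (p : pred T) (s : seq T) : bool :=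
  if s is x :: s' then (if p x then true else has_lazy p s') else false.

Lemma all_lazyE T (p : pred T) s : all_lazy p s = all p s.
Proof. by elim: s => //= x s ->; case: (p x). Qed.

Lemma has_lazyE T (p : pred T) s : has_lazy p s = has p s.
Proof. by elim: s => //= x s ->; case: (p x). Qed.

Definition visible_in (table : seq (nat * nat * seq (seq nat))) (s : seq bool) : bool :=
  all_lazy (fun e => if nth false s e.1.1 && nth false s e.1.2
                     then has_lazy (all_lazy (fun k => ~~ nth false s k)) e.2 else true) table.

Section Enumeration.
Variable n : nat.
Local Notation V := (n.-tuple bool).
Local Notation origin := (nseq_tuple n false).

Fixpoint geodesic_interiors (fuel : nat) (x y : seq bool) : seq (seq (seq bool)) :=
  if fuel is f.+1 then
    if hamming_seq x y <= 1 then [:: [::]] else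
    flatten [seq [seq z :: g | g <- geodesic_interiors f z y]
            | z <- words n & (hamming_seq x z == 1) && (hamming_seq z y == (hamming_seq x y).-1)]
  else [:: [::]].

Definition visibility_table (pairs : seq (nat * nat)) : seq (nat * nat * seq (seq nat)) :=
  [seq (ij.1, ij.2, [seq [seq index z (words n) | z <- g] | g <-
       geodesic_interiors n (nth [::] (words n) ij.1) (nth [::] (words n) ij.2)])
  | ij <- pairs].

(* [insubd] does not evaluate (it goes through the opaque [idP]), so the tables work with words. *)
Definition indicator (Y : {set V}) : seq bool := [seq insubd origin w \in Y | w <- words n].

Lemma val_mem_words (v : V) : val v \in words n.
Proof. by have := mem_words v; rewrite size_tuple. Qed.

Lemma count_indicator (Y : {set V}) : count id (indicator Y) = #|Y|.
Proof.
have uniq_vertices : uniq (map (insubd origin) (words n)).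
  rewrite map_inj_in_uniq ?uniq_words // => s t Hs Ht /(congr1 val).
  by rewrite !val_insubd /= (size_mem_words Hs) (size_mem_words Ht) eqxx.
have -> : indicator Y = map (mem Y) (map (insubd origin) (words n)) by rewrite -map_comp.
rewrite count_map cardE -size_filter; apply: perm_size; apply: uniq_perm.
- exact: filter_uniq.
- exact: enum_uniq.
move=> v; rewrite mem_filter mem_enum andb_idr // => _.
by apply/mapP; exists (val v); rewrite ?valKd ?val_mem_words.
Qed.

Lemma nth_indicator (Y : {set V}) (v : V) :
  nth false (indicator Y) (index (val v) (words n)) = (v \in Y).
Proof. by rewrite (nth_map [::]) ?index_mem ?val_mem_words // nth_index ?val_mem_words // valKd. Qed.

Lemma nth_indicator_mem (Y : {set V}) i :
  nth false (indicator Y) i -> exists2 x : V, x \in Y & val x = nth [::] (words n) i.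
Proof.
case: (ltnP i (size (words n))) => Hi; last by rewrite nth_default // size_map.
rewrite (nth_map [::]) // => HY; exists (insubd origin (nth [::] (words n) i)) => //.
by rewrite val_insubd (size_mem_words (mem_nth _ Hi)) eqxx.
Qed.

Lemma geodesic_interiors_complete fuel (x y : V) p :
  geodesic x y p -> hamming x y <= fuel ->
  map val (internal x p) \in geodesic_interiors fuel (val x) (val y).
Proof.
elim: fuel x p => [|f IHf] x p Hp; have /andP [_ /eqP Hsize] := Hp => Hf /=.
  by move: Hf; rewrite -Hsize leqn0; case: p {Hp Hsize}.
rewrite -!hamming_seqE; case: ifP => Hxy.
  by move: Hxy; rewrite -Hsize; case: p {Hp Hsize} => [|z [|a q]].
case: p Hp Hsize => [|z [|a q]] Hp Hsize; try by move: Hxy; rewrite -Hsize.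
have [Hxz Hq] := geodesic_cons Hp; have /andP [_ /eqP Hqsize] := Hq.
apply/flatten_mapP; exists (val z).
  by rewrite mem_filter val_mem_words andbT -!hamming_seqE Hxz -Hsize -Hqsize /= !eqxx.
by apply: (map_f (cons (val z)) (IHf z _ Hq _)); rewrite -Hqsize -ltnS; move: Hf; rewrite -Hsize.
Qed.

Lemma visible_in_indicator (Y : {set V}) pairs :
  mutually_visible Y -> visible_in (visibility_table pairs) (indicator Y).
Proof.
move=> HY; rewrite /visible_in all_lazyE all_map; apply/allP => ij _ /=.
case: ifP => // /andP [/nth_indicator_mem [x Hx <-] /nth_indicator_mem [y Hy <-]].
have [p Hp Hin] := HY _ _ Hx Hy.
rewrite has_lazyE; apply/hasP; exists [seq index z (words n) | z <- map val (internal x p)].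
  exact/map_f/(geodesic_interiors_complete Hp)/hamming_le_dim.
by rewrite all_lazyE !all_map; apply/allP => v Hv /=; rewrite nth_indicator (allP Hin v Hv).
Qed.

End Enumeration.

Lemma indicator_facets k (Y : {set k.+1.-tuple bool}) :
  indicator Y = indicator (facet Y false) ++ indicator (facet Y true).
Proof.
rewrite /indicator /= map_cat -!map_comp.
congr (_ ++ _); apply/eq_in_map => s Hs /=; rewrite inE; congr (_ \in Y); apply/val_inj;
  by rewrite /= !val_insubd /= (size_mem_words Hs) !eqxx.
Qed.

Definition table4 := visibility_table 4 [seq (i, j) | i <- iota 0 16, j <- iota 0 i].

(* Only pairs with one end in each facet of Q_5 ([words 5] lists the vertices with first bit
   [false] first); a partial table suffices to refute mutual visibility. *)
Definition table5 := visibility_table 5 [seq (i, 16 + j) | i <- iota 0 16, j <- iota 0 16].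

Definition visible_at_least8 (table : seq (nat * nat * seq (seq nat))) : seq (seq bool) :=
  [seq s <- words 16 | visible_in table s && (8 <= count id s)].

(* The tables are arguments rather than constants so that evaluation computes each of them once. *)
Definition certificate (L : seq (seq bool)) (table : seq (nat * nat * seq (seq nat))) : bool :=
  all (fun a => count id a <= 9) L &&
  all (fun a => all (fun b => if count id a + count id b <= 16 then true
                               else ~~ visible_in table (a ++ b)) L) L.

Lemma certificate_Q4_Q5 : certificate (visible_at_least8 table4) table5.
Proof. by vm_compute. Qed.

Lemma indicator_visible_at_least8 (Z : {set 4.-tuple bool}) :
  mutually_visible Z -> 8 <= #|Z| -> indicator Z \in visible_at_least8 table4.
Proof.
move=> HZ HZ8; rewrite mem_filter visible_in_indicator // count_indicator HZ8.
by have := mem_words (indicator Z); rewrite !size_map size_words.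
Qed.

Lemma mutually_visible_card_Q4 (Z : {set 4.-tuple bool}) : mutually_visible Z -> #|Z| <= 9.
Proof.
move=> HZ; case: (leqP 8 #|Z|) => [HZ8|]; last by move/ltnW/leq_trans; apply.
have /andP [Hsmall _] := certificate_Q4_Q5.
by rewrite -count_indicator; apply: (allP Hsmall); apply: indicator_visible_at_least8.
Qed.

Lemma mutually_visible_card_Q5 (Y : {set 5.-tuple bool}) : mutually_visible Y -> #|Y| <= 16.
Proof.
move=> HY; have HY0 := facet_visible (b := false) HY; have HY1 := facet_visible (b := true) HY.
rewrite leqNgt card_facets; apply/negP => HY17.
have HY08 : 8 <= #|facet Y false|.
  by rewrite -(leq_add2r 9); apply: leq_trans HY17 (leq_add _ (mutually_visible_card_Q4 HY1)).
have HY18 : 8 <= #|facet Y true|.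
  by rewrite -(leq_add2l 9); apply: leq_trans HY17 (leq_add (mutually_visible_card_Q4 HY0) _).
have /andP [_ /allP Hpairs] := certificate_Q4_Q5.
have := allP (Hpairs _ (indicator_visible_at_least8 HY0 HY08)) _ (indicator_visible_at_least8 HY1 HY18).
by rewrite !count_indicator leqNgt HY17 -indicator_facets visible_in_indicator.
Qed.

Lemma mutually_visible_card d :
  5 <= d -> forall X : {set d.-tuple bool}, mutually_visible X -> #|X| <= 2 ^ d.-1.
Proof.
elim: d => // d IHd; case: (ltngtP 4 d) => [Hd4 _ X HX | Hd4 | <- _]; last exact: mutually_visible_card_Q5.
  have E2d : 2 ^ d = 2 ^ d.-1 + 2 ^ d.-1.
    by rewrite addnn -mul2n -expnS prednK // (ltn_trans _ Hd4).
  by rewrite card_facets /= E2d; apply: leq_add; apply: IHd => //; apply: facet_visible.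
by rewrite ltnS leqNgt Hd4.
Qed.

Theorem corollary3p3 (d : nat) : 5 <= d -> mu (@Q_adj d) <= 2 ^ d.-1.
Proof.
move=> Hd; apply/bigmax_leqP => X; rewrite /pbool.
case: excluded_middle_informative => // /mutual_visibility_set_visible HX _.
exact: mutually_visible_card.
Qed.
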